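(* Let $\mathcal{M}=(S,A,\delta)$ be a finite fuzzy transition system and let $\gamma=1$. Define $d_0=\bot$ (where $\bot(s,t)=0$ for all $s,t\in S$) and $d_{n+1}=\Delta(d_n)$. Then the number of iterations until $d_n=d_{n+1}$ holds for the first time is bounded by a polynomial in the size $|\mathcal{M}|$.
   Context: A fuzzy set on a finite set $X$ is a map $\mu:X\to[0,1]$; $\mathcal{F}(X)$ is the set of fuzzy sets on $X$; $\mu(U)=\max_{x\in U}\mu(x)$; $\mathsf{Supp}(\mu)=\{x\mid\mu(x)>0\}$. A fuzzy transition system is $\mathcal{M}=(S,A,\delta)$ with $S,A$ finite and $\delta:S\times A\to\mathcal{P}(\mathcal{F}(S))$, each $\delta(s,a)$ finite. Its size is $|\mathcal{M}|=|S|+\sum_{s\in S,a\in A,\mu\in\delta(s,a)}|\mathsf{Supp}(\mu)|$. $\mathcal{D}(S)$ is the set of pseudo-ultrametrics $d:S\times S\to[0,1]$, ordered pointwise. Lifting: $\hat d(\mu,\eta)=1$ if $\mu(S)\ne\eta(S)$, and otherwise $\hat d(\mu,\eta)$ is the minimum of $\max_{u,v}\min(d(u,v),x_{uv})$ over $x_{uv}\ge0$ with $\max_v x_{uv}=\mu(u)$ for all $u$ and $\max_u x_{uv}=\eta(v)$ for all $v$. For finite $Z\subseteq\mathcal{F}(S)$: $\hat d(\mu,Z)=\min_{\eta\in Z}\hat d(\mu,\eta)$ if $Z\ne\emptyset$, else $1$. Hausdorff distance: $H_{\hat d}(\emptyset,\emptyset)=0$, otherwise $H_{\hat d}(Y,Z)=\max(\max_{\mu\in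 Y}\hat d(\mu,Z),\max_{\eta\in Z}\hat d(\eta,Y))$. With discounting factor $\gamma\in(0,1]$, $\Delta(d)(s,t)=\gamma\cdot\max_{a\in A}H_{\hat d}(\delta(s,a),\delta(t,a))$. *)

From HB Require Import structures.
From mathcomp Require Import all_boot all_order all_algebra.
From mathcomp Require Import finmap.
From mathcomp Require Import boolp classical_sets reals.
Set Implicit Arguments. Unset Strict Implicit. Unset Printing Implicit Defensive.
Import Order.TTheory GRing.Theory Num.Theory.
Local Open Scope ring_scope.

Section FTS.
Variables (R : realType) (S A : finType).

Definition fuzzy := {ffun S -> R}.

Definition trans := S -> A -> {fset fuzzy}.

Definition fts_wf (delta : trans) : Prop :=
  forall s a (mu : fuzzy), mu \in delta s a -> forall x, 0 <= mu x <= 1.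

Definition fts_size (delta : trans) : nat :=
  (#|S| + \sum_(s : S) \sum_(a : A) \sum_(mu <- delta s a)
      #|[set x : S | (0 < mu x)%R]|)%N.

(* mu(U) for U = S : max_{x in S} mu(x)  (fuzzy values are >= 0) *)
Definition fmass (mu : fuzzy) : R := \big[Num.max/0]_(x : S) mu x.

Definition coupling (mu eta : fuzzy) (x : S -> S -> R) : Prop :=
  (forall u v, 0 <= x u v) /\
  (forall u, \big[Num.max/0]_(v : S) x u v = mu u) /\
  (forall v, \big[Num.max/0]_(u : S) x u v = eta v).

Definition coupling_cost (d : S -> S -> R) (x : S -> S -> R) : R :=
  \big[Num.max/0]_(u : S) \big[Num.max/0]_(v : S) Num.min (d u v) (x u v).

(* the lifting \hat d; the minimum over couplings is written as an infimum
   (it is attained). *)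
Definition lift (d : S -> S -> R) (mu eta : fuzzy) : R :=
  if fmass mu != fmass eta then 1
  else inf [set r | exists x, coupling mu eta x /\ r = coupling_cost d x].

Definition lift_set (d : S -> S -> R) (mu : fuzzy) (Z : {fset fuzzy}) : R :=
  if Z == fset0 then 1
  else inf [set r | exists2 eta, eta \in Z & r = lift d mu eta].

Definition hausdorff (d : S -> S -> R) (Y Z : {fset fuzzy}) : R :=
  if (Y == fset0) && (Z == fset0) then 0
  else Num.max (\big[Num.max/0]_(mu <- Y) lift_set d mu Z)
               (\big[Num.max/0]_(eta <- Z) lift_set d eta Y).

Definition Delta (gamma : R) (delta : trans) (d : S -> S -> R) : S -> S -> R :=
  fun s t => gamma * \big[Num.max/0]_(a : A) hausdorff d (delta s a) (delta t a).

Definition dseq (gamma : R) (delta : trans) (n : nat) : S -> S -> R :=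
  iter n (Delta gamma delta) (fun _ _ => 0).

End FTS.

From Pilot Require Import Defs.
From HB Require Import structures.
From mathcomp Require Import all_boot all_order all_algebra.
From mathcomp Require Import finmap.
From mathcomp Require Import boolp classical_sets reals.
From mathcomp Require Import zify.
Import Order.TTheory GRing.Theory Num.Theory.
Local Open Scope ring_scope.
Local Open Scope classical_set_scope.
Set Implicit Arguments. Unset Strict Implicit.

(* For gamma = 1 every d_n takes its values in the finite set V made of 0, 1
   and the positive membership degrees occurring in delta: rounding a
   coupling down to V keeps it a coupling without increasing its cost, so
   liftings, Hausdorff distances and hence Delta preserve V-valued distances.
   Since Delta is monotone and d_0 = bottom, the d_n increase pointwise; the
   potential sum_(s,t) #{v in V | v <= d_n(s,t)} therefore strictly increases
   until d_n = d_(n+1), and it is bounded by |S|^2 |V| <= 2 (|M| + 1)^3. *)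

Lemma sub_count_lt (T : eqType) (p q : pred T) (s : seq T) y :
  subpred p q -> y \in s -> q y -> ~~ p y -> (count p s < count q s)%N.
Proof.
move=> pq; elim: s => //= a s IHs; rewrite inE => /predU1P[<- qy npy|ys qy npy].
  by rewrite (negbTE npy) qy add0n add1n ltnS sub_count.
have pa_qa : (p a <= q a)%N by case pa: (p a); rewrite ?(pq a pa).
by rewrite -addnS leq_add // IHs.
Qed.

Lemma mem_bigcat (I : Type) (T : eqType) (r : seq I) (P : pred I)
    (F : I -> seq T) y :
  (y \in \big[cat/[::]]_(i <- r | P i) F i) = has (fun i => P i && (y \in F i)) r.
Proof.
elim: r => [|i r IHr]; first by rewrite big_nil.
by rewrite big_cons /=; case: (P i); rewrite ?mem_cat IHr.
Qed.

Lemma size_bigcat (I : Type) (T : Type) (r : seq I) (P : pred I)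
    (F : I -> seq T) :
  size (\big[cat/[::]]_(i <- r | P i) F i) = (\sum_(i <- r | P i) size (F i))%N.
Proof. exact: (big_morph _ (@size_cat T)). Qed.

Section NondecreasingChain.
Variables (disp : Order.disp_t) (X : porderType disp) (T : finType).
Variables (V : seq X) (f : nat -> T -> X).
Hypothesis f_mem : forall n x, f n x \in V.
Hypothesis f_nondecr : forall n x, (f n x <= f n.+1 x)%O.

Let potential n := (\sum_(x : T) count (fun v => v <= f n x)%O V)%N.

Let potential_le_card n : (potential n <= #|T| * size V)%N.
Proof.
rewrite -sum_nat_const; apply: leq_sum => x _; exact: count_size.
Qed.

Let potential_lt n : f n <> f n.+1 -> (potential n < potential n.+1)%N.
Proof.
move=> fn_neq; have /existsNP[x fx_neq] : ~ forall x, f n x = f n.+1 x.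
  by move=> fn_eq; apply: fn_neq; apply/funext.
have count_le y : subpred (fun v => v <= f n y)%O (fun v => v <= f n.+1 y)%O.
  by move=> v /= /le_trans; apply.
rewrite /potential (bigD1 x) // [X in (_ < X)%N](bigD1 x) //= -addSn.
apply: leq_add; last by apply: leq_sum => y _; exact: sub_count.
apply: (sub_count_lt (count_le x) (f_mem n.+1 x)); rewrite /= ?lexx //.
by apply/negP => le_back; apply: fx_neq; apply: le_anti; rewrite f_nondecr.
Qed.

Lemma nondecreasing_chain_stabilizes :
  exists2 n, (n <= #|T| * size V)%N & f n = f n.+1.
Proof.
set N := (#|T| * size V)%N.
have [//|never_eq] := pselect (exists2 n, (n <= N)%N & f n = f n.+1).
have growth n : (n <= N.+1)%N -> (n <= potential n)%N.
  elim: n => // n IHn le_n1N; apply: leq_ltn_trans (IHn (ltnW le_n1N)) _.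
  by apply: potential_lt => fn_eq; apply: never_eq; exists n.
by have := leq_trans (growth _ (leqnn _)) (potential_le_card N.+1); rewrite ltnn.
Qed.

End NondecreasingChain.

Section MonotoneMinMax.
Variables (disp disp' : Order.disp_t) (T : orderType disp) (T' : orderType disp').
Variable f : T -> T'.
Hypothesis f_homo : {homo f : x y / (x <= y)%O}.

Lemma homo_max : {morph f : x y / Order.max x y}.
Proof.
move=> x y; case: (leP x y) => [xy|/ltW yx].
  by rewrite !max_r ?f_homo.
by rewrite !max_l ?f_homo.
Qed.

Lemma homo_min : {morph f : x y / Order.min x y}.
Proof.
move=> x y; case: (leP x y) => [xy|/ltW yx].
  by rewrite !min_l ?f_homo.
by rewrite !min_r ?f_homo.
Qed.

End MonotoneMinMax.

Lemma le_bigmax2_seq (disp : Order.disp_t) (T : orderType disp) (I : Type)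
    (r : seq I) (P : pred I) (F G : I -> T) (x0 : T) :
  (forall i, P i -> (F i <= G i)%O) ->
  (\big[Order.max/x0]_(i <- r | P i) F i <= \big[Order.max/x0]_(i <- r | P i) G i)%O.
Proof. by move=> FG; elim/big_ind2: _ => // *; exact: le_max2. Qed.

Section Infimum.
Variable R : realType.
Implicit Types (E : set R) (V : seq R).

Lemma inf_ge0 E : (forall r, E r -> 0 <= r) -> 0 <= inf E.
Proof.
move=> E_ge0; have [En|E0] := pselect (E !=set0); first exact: lb_le_inf.
by rewrite inf_out // => -[].
Qed.

Lemma le_inf_inf E1 E2 : (forall r, E1 r -> 0 <= r) ->
  (forall r, E2 r -> exists2 r1, E1 r1 & r1 <= r) -> (E1 !=set0 -> E2 !=set0) ->
  inf E1 <= inf E2.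
Proof.
move=> E1_ge0 E12 E1E2; have [E2n|E20] := pselect (E2 !=set0); last first.
  by rewrite !inf_out // => -[// /E1E2].
apply: lb_le_inf => // r /E12[r1 E1r1 r1r]; apply: le_trans r1r.
by apply: ge_inf => //; exists 0 => s /E1_ge0.
Qed.

Lemma inf_mem_seq E V : 0 \in V ->
  (forall r, E r -> exists2 v, v \in V & E v /\ v <= r) -> inf E \in V.
Proof.
move=> V0 E_V; have [[r0 /E_V[v0 v0V [Ev0 _]]]|E0] := pselect (E !=set0); last first.
  by rewrite inf_out // => -[].
pose m := \big[Num.min/v0]_(v <- V | `[< E v >]) v.
have [mV Em] : m \in V /\ E m.
  rewrite /m big_seq_cond; elim/big_ind: _ => // [x y [xV Ex] [yV Ey]|v].
    by rewrite minEle; case: ifP.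
  by move=> /andP[vV /asboolP].
have m_lb r : E r -> m <= r.
  move=> /E_V[v vV [Ev vr]]; apply: le_trans vr.
  by apply: ge_bigmin_seq => //; exact/asboolP.
suff -> : inf E = m by [].
apply/le_anti/andP; split; last by apply: lb_le_inf; [exists m | exact: m_lb].
by apply: (ge_inf _ Em); exists m; exact: m_lb.
Qed.

End Infimum.

Definition floor_in (R : realType) (V : seq R) (y : R) : R :=
  \big[Num.max/0]_(v <- V | v <= y) v.

Section FloorIn.
Variables (R : realType) (V : seq R).

Lemma floor_in_ge0 y : 0 <= floor_in V y.
Proof. exact: bigmax_ge_id. Qed.

Lemma floor_in_le y : 0 <= y -> floor_in V y <= y.
Proof. by move=> y_ge0; apply: bigmax_le. Qed.

Lemma floor_in_homo : {homo floor_in V : y y' / y <= y'}.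
Proof. by move=> y y' yy'; apply: sub_bigmax => v /le_trans; apply. Qed.

Lemma floor_in_id v : v \in V -> 0 <= v -> floor_in V v = v.
Proof.
move=> vV v_ge0; apply/le_anti/andP; split; first exact: floor_in_le.
exact: le_bigmax_seq vV _.
Qed.

Lemma floor_in_mem y : 0 \in V -> floor_in V y \in V.
Proof.
move=> V0; rewrite /floor_in big_seq_cond.
elim/big_ind: _ => // [a b aV bV|v /andP[] //].
by rewrite maxEle; case: ifP.
Qed.

Lemma floor_in_bigmax (I : Type) (r : seq I) (P : pred I) (F : I -> R) :
  floor_in V (\big[Num.max/0]_(i <- r | P i) F i) =
  \big[Num.max/0]_(i <- r | P i) floor_in V (F i).
Proof.
apply: (big_morph _ (homo_max floor_in_homo)).
by apply: bigmax_eq_id => v; apply.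
Qed.

End FloorIn.

Section DeltaMonotone.
Variables (R : realType) (S A : finType) (delta : trans R S A).
Implicit Types (d : S -> S -> R) (mu eta : fuzzy R S) (Y Z : {fset fuzzy R S}).
Local Notation lift := (@Defs.lift R S).

Lemma coupling_cost_ge0 d x : 0 <= coupling_cost d x.
Proof. exact: bigmax_ge_id. Qed.

Lemma le_coupling_cost d d' x : (forall u v, d u v <= d' u v) ->
  coupling_cost d x <= coupling_cost d' x.
Proof.
by move=> dd'; apply: le_bigmax2 => u _; apply: le_bigmax2 => v _; apply: le_min2.
Qed.

Lemma lift_ge0 d mu eta : 0 <= lift d mu eta.
Proof.
rewrite /lift; case: ifP => _; first exact: ler01.
by apply: inf_ge0 => r [x [_ ->]]; exact: coupling_cost_ge0.
Qed.

Lemma le_lift d d' mu eta : (forall u v, d u v <= d' u v) ->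
  lift d mu eta <= lift d' mu eta.
Proof.
move=> dd'; rewrite /lift; case: ifP => // _; apply: le_inf_inf.
- by move=> r [x [_ ->]]; exact: coupling_cost_ge0.
- move=> r [x [cx ->]]; exists (coupling_cost d x); first by exists x.
  exact: le_coupling_cost.
- by move=> [r [x [cx _]]]; exists (coupling_cost d' x), x.
Qed.

Lemma le_lift_set d d' mu Z : (forall u v, d u v <= d' u v) ->
  lift_set d mu Z <= lift_set d' mu Z.
Proof.
move=> dd'; rewrite /lift_set; case: ifPn => // /fset0Pn[eta0 eta0Z].
apply: le_inf_inf.
- by move=> r [eta _ ->]; exact: lift_ge0.
- move=> r [eta etaZ ->]; exists (lift d mu eta); first by exists eta.
  exact: le_lift.
- by move=> _; exists (lift d' mu eta0), eta0.
Qed.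

Lemma le_hausdorff d d' Y Z : (forall u v, d u v <= d' u v) ->
  hausdorff d Y Z <= hausdorff d' Y Z.
Proof.
move=> dd'; rewrite /hausdorff; case: ifP => // _.
by apply: le_max2; apply: le_bigmax2_seq => mu _; exact: le_lift_set.
Qed.

Lemma Delta_ge0 gamma d s t : 0 <= gamma -> 0 <= Delta gamma delta d s t.
Proof. by move=> gamma_ge0; rewrite mulr_ge0 // bigmax_ge_id. Qed.

Lemma le_Delta gamma d d' s t : 0 <= gamma -> (forall u v, d u v <= d' u v) ->
  Delta gamma delta d s t <= Delta gamma delta d' s t.
Proof.
move=> gamma_ge0 dd'; rewrite /Delta ler_wpM2l // le_bigmax2 // => a _.
exact: le_hausdorff.
Qed.

Lemma le_dseqS gamma n s t : 0 <= gamma ->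
  dseq gamma delta n s t <= dseq gamma delta n.+1 s t.
Proof.
move=> gamma_ge0; elim: n s t => [|n IHn] s t; first exact: Delta_ge0.
exact: le_Delta.
Qed.

End DeltaMonotone.

Section DeltaValues.
Variables (R : realType) (S A : finType) (delta : trans R S A) (V : seq R).
Hypotheses (V0 : 0 \in V) (V1 : 1 \in V) (V_ge0 : {in V, forall r, 0 <= r}).
Hypothesis delta_V : forall s a mu, mu \in delta s a -> forall u, mu u \in V.
Implicit Types (d : S -> S -> R) (mu eta : fuzzy R S) (Y Z : {fset fuzzy R S}).
Local Notation lift := (@Defs.lift R S).

Lemma bigmax_mem (I : Type) (r : seq I) (P : pred I) (F : I -> R) :
  (forall i, P i -> F i \in V) -> \big[Num.max/0]_(i <- r | P i) F i \in V.
Proof. by move=> FV; elim/big_ind: _ => // a b aV bV; rewrite maxEle; case: ifP. Qed.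

Lemma coupling_floor_in mu eta x :
  (forall u, mu u \in V) -> (forall v, eta v \in V) ->
  coupling mu eta x -> coupling mu eta (fun u v => floor_in V (x u v)).
Proof.
move=> muV etaV [_ [x_mu x_eta]]; split; first by move=> u v; exact: floor_in_ge0.
split=> w; rewrite -floor_in_bigmax ?x_mu ?x_eta floor_in_id //; exact: V_ge0.
Qed.

Lemma coupling_cost_floor_in d x : (forall u v, d u v \in V) ->
  coupling_cost d (fun u v => floor_in V (x u v)) = floor_in V (coupling_cost d x).
Proof.
move=> dV; rewrite /coupling_cost floor_in_bigmax; apply: eq_bigr => u _.
rewrite floor_in_bigmax; apply: eq_bigr => v _.
by rewrite (homo_min (@floor_in_homo R V)) (floor_in_id (dV u v)) // V_ge0.
Qed.

Lemma lift_mem d mu eta : (forall u v, d u v \in V) ->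
  (forall u, mu u \in V) -> (forall v, eta v \in V) -> lift d mu eta \in V.
Proof.
move=> dV muV etaV; rewrite /lift; case: ifP => // _.
apply: inf_mem_seq => // r [x [cx ->]].
exists (floor_in V (coupling_cost d x)); first exact: floor_in_mem.
split; last exact/floor_in_le/coupling_cost_ge0.
exists (fun u v => floor_in V (x u v)).
by rewrite coupling_cost_floor_in //; split => //; exact: coupling_floor_in.
Qed.

Lemma lift_set_mem d mu Z : (forall u v, d u v \in V) ->
  (forall u, mu u \in V) -> (forall eta, eta \in Z -> forall v, eta v \in V) ->
  lift_set d mu Z \in V.
Proof.
move=> dV muV ZV; rewrite /lift_set; case: ifP => // _.
apply: inf_mem_seq => // r [eta etaZ ->]; exists (lift d mu eta).
  by apply: lift_mem => //; exact: ZV.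
by split; first by exists eta.
Qed.

Lemma hausdorff_mem d Y Z : (forall u v, d u v \in V) ->
  (forall mu, mu \in Y -> forall u, mu u \in V) ->
  (forall eta, eta \in Z -> forall v, eta v \in V) ->
  hausdorff d Y Z \in V.
Proof.
move=> dV YV ZV; rewrite /hausdorff; case: ifP => // _; rewrite !big_seq maxEle.
by case: ifP => _; apply: bigmax_mem => mu mu_in; apply: lift_set_mem; auto.
Qed.

Lemma Delta1_mem d s t : (forall u v, d u v \in V) -> Delta 1 delta d s t \in V.
Proof.
move=> dV; rewrite /Delta mul1r; apply: bigmax_mem => a _.
by apply: hausdorff_mem => // mu /delta_V.
Qed.

Lemma dseq1_mem n s t : dseq 1 delta n s t \in V.
Proof. by elim: n s t => [|n IHn] s t //; exact: Delta1_mem. Qed.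

End DeltaValues.

Section FTSValues.
Variables (R : realType) (S A : finType) (delta : trans R S A).

Definition support_values (mu : fuzzy R S) : seq R :=
  [seq mu x | x <- enum [set x | 0 < mu x]%SET].

Definition fts_values : seq R :=
  [:: 0, 1 & \big[cat/[::]]_(s : S) \big[cat/[::]]_(a : A)
               \big[cat/[::]]_(mu <- delta s a) support_values mu].

Lemma size_fts_values : (#|S| + size fts_values)%N = (fts_size delta).+2.
Proof.
rewrite /= size_bigcat /fts_size !addnS; congr (_ + _)%N.+2.
apply: eq_bigr => s _; rewrite size_bigcat; apply: eq_bigr => a _.
by rewrite size_bigcat; apply: eq_bigr => mu _; rewrite size_map -cardE.
Qed.

Lemma fts_values_ge0 : {in fts_values, forall r, 0 <= r}.
Proof.
move=> r; rewrite !inE => /or3P[/eqP-> // | /eqP-> // |].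
rewrite mem_bigcat => /hasP[s _ /andP[_]]; rewrite mem_bigcat.
move=> /hasP[a _ /andP[_]]; rewrite mem_bigcat => /hasP[mu _ /andP[_]].
by move=> /mapP[x]; rewrite mem_enum inE => /ltW x_ge0 ->.
Qed.

Lemma mem_fts_values s a mu u : fts_wf delta -> mu \in delta s a ->
  mu u \in fts_values.
Proof.
move=> wf mu_in; have /andP[mu_ge0 _] := wf s a mu mu_in u.
have [<-|mu_neq0] := eqVneq 0 (mu u); first by rewrite inE eqxx.
have mu_gt0 : 0 < mu u by rewrite lt_neqAle mu_neq0.
rewrite !inE; apply/or3P; apply: Or33.
rewrite mem_bigcat; apply/hasP; exists s; rewrite ?mem_index_enum //=.
rewrite mem_bigcat; apply/hasP; exists a; rewrite ?mem_index_enum //=.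
rewrite mem_bigcat; apply/hasP; exists mu => //=.
by apply: map_f; rewrite mem_enum inE.
Qed.

Lemma fts_values_card_le :
  (#|S| * #|S| * size fts_values <= 2 * (fts_size delta).+1 ^ 3)%N.
Proof.
have : (2 <= size fts_values)%N by [].
move: size_fts_values; move: #|S| (size _) (fts_size delta) => s v z sv v_ge2.
have [s_le v_le] : (s <= z.+1)%N /\ (v <= 2 * z.+1)%N by lia.
by apply: leq_trans (leq_mul (leq_mul s_le s_le) v_le) _; nia.
Qed.

End FTSValues.

Theorem proposition3 :
  forall R : realType,
  exists c k : nat,
  forall (S A : finType) (delta : trans R S A),
    fts_wf delta ->
    exists n : nat,
      (n <= c * (fts_size delta).+1 ^ k)%N /\
      dseq 1 delta n = dseq 1 delta n.+1.
Proof.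
move=> R; exists 2%N, 3%N => S A delta wf.
pose d n (p : S * S) := dseq 1 delta n p.1 p.2.
have d_mem n p : d n p \in fts_values delta.
  apply: dseq1_mem; rewrite ?inE ?eqxx ?orbT //; first exact: fts_values_ge0.
  by move=> s a mu mu_in u; exact: mem_fts_values mu_in.
have d_nondecr n p : d n p <= d n.+1 p by apply: le_dseqS; exact: ler01.
have [n n_le d_eq] := nondecreasing_chain_stabilizes d_mem d_nondecr.
exists n; split.
  by apply: leq_trans n_le _; rewrite card_prod fts_values_card_le.
by apply/funext => s; apply/funext => t; exact: (congr1 (fun g => g (s, t)) d_eq).
Qed.
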